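(* Let $n\ge 1$, let $z_1,\dots,z_n\in\mathbb{C}$ be pairwise distinct, let $k_1,\dots,k_n\ge 0$ be integers, let $\beta_1,\dots,\beta_n\in\mathbb{C}$ and $\alpha_i^{(j)}\in\mathbb{C}$ ($j=1,\dots,n$, $i=1,\dots,k_j$), and set $m=\sum_{j=1}^n (k_j+1)$. For each $j$ let $J_{j,k_j}\in\mathbb{C}^{(k_j+1)\times(k_j+1)}$ be the upper bidiagonal matrix with diagonal entries $z_j$ and superdiagonal entries, from top to bottom, $\alpha_{k_j}^{(j)},\dots,\alpha_1^{(j)}$. Let $Z=J_{1,k_1}\oplus\cdots\oplus J_{n,k_n}\in\mathbb{C}^{m\times m}$ (block diagonal) and $w=\begin{bmatrix}\beta_1 e_{k_1+1}^\top & \cdots & \beta_n e_{k_n+1}^\top\end{bmatrix}^\top\in\mathbb{C}^m$, where $e_{k_j+1}=(0,\dots,0,1)^\top\in\mathbb{R}^{k_j+1}$. Let $k,\ell\le m$, let $x\in\mathcal{K}_k(Z,w)$ and $y\in\mathcal{K}_\ell(Z,w)$, and let $p\in\mathcal{P}_k$ and $q\in\mathcal{P}_\ell$ be polynomials with $p(Z)w=x$ and $q(Z)w=y$. Then $$y^H x = \sum_{j=1}^n |\beta_j|^2\left(\sum_{r=0}^{k_j}\left|\frac{\prod_{i=1}^{r}\alpha_i^{(j)}}{r!}\right|^2 \overline{q^{(r)}(z_j)}\, p^{(r)}(z_j)\right).$$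
   Context: $\mathcal{P}_k$ denotes the space of polynomials with complex coefficients of degree at most $k$. For $A\in\mathbb{C}^{m\times m}$ and $v\in\mathbb{C}^m$, the Krylov subspace is $\mathcal{K}_k(A,v)=\mathrm{span}\{v,Av,\dots,A^{k-1}v\}$. $y^H$ denotes the conjugate transpose of $y$. An empty product equals $1$. *)

(* Complex numbers: an arbitrary numClosedFieldType C
   (e.g. algC, or R[i] for a real closed field R); conjugation z^*, modulus `|z|. *)
From HB Require Import structures.
From mathcomp Require Import all_boot all_order all_algebra.
Set Implicit Arguments. Unset Strict Implicit. Unset Printing Implicit Defensive.
Import Order.TTheory GRing.Theory Num.Theory.
Local Open Scope ring_scope.

Definition poly_mx (C : comNzRingType) (m : nat) (p : {poly C}) (A : 'M[C]_m)
  : 'M[C]_m := \sum_(i < size p) p`_i *: A ^+ i.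

Definition in_krylov (C : comNzRingType) (m k : nat) (A : 'M[C]_m)
  (v x : 'cV[C]_m) : Prop :=
  exists c : 'I_k -> C, x = \sum_(i < k) c i *: (A ^+ i *m v).

Definition jordan_like (C : comNzRingType) (kj : nat) (z : C) (alpha : nat -> C)
  : 'M[C]_(kj.+1) :=
  \matrix_(r < kj.+1, s < kj.+1)
    (if r == s :> nat then z
     else if s == r.+1 :> nat then alpha (kj - r)%N else 0).

Definition Zmat (C : comNzRingType) (n : nat) (k : 'I_n -> nat) (z : 'I_n -> C)
  (alpha : 'I_n -> nat -> C) : 'M[C]_(\sum_(j < n) (k j).+1) :=
  \mxdiag_(j < n) jordan_like (k j) (z j) (alpha j).

Definition wvec (C : comNzRingType) (n : nat) (k : 'I_n -> nat) (beta : 'I_n -> C)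
  : 'cV[C]_(\sum_(j < n) (k j).+1) :=
  \mxcol_(j < n) (beta j *: delta_mx (ord_max : 'I_(k j).+1) (0 : 'I_1)).

Definition herm_dot (C : numClosedFieldType) (m : nat) (y x : 'cV[C]_m) : C :=
  \sum_(i < m) (y i 0)^* * x i 0.

(* Each Jordan-like block is J = z I + N with N a weighted shift, and the
   corresponding block of w is a multiple of the last basis vector e.  Taylor's
   formula gives p(J) = sum_r p^(r)(z)/r! N^r, and N^r e = (alpha_1 ... alpha_r)
   times the basis vector r places higher, so row k_j - r of the j-th block of
   p(Z) w is beta_j (alpha_1 ... alpha_r) p^(r)(z_j) / r!.  The Hermitian
   product then splits blockwise and row by row into the stated sum. *)

From HB Require Import structures.
From mathcomp Require Import all_boot all_order all_algebra zify ring.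
Import Order.TTheory GRing.Theory Num.Theory.
Local Open Scope ring_scope.
Set Implicit Arguments. Unset Strict Implicit.

Section PolyMx.
Variables (R : comNzRingType) (m : nat).

Lemma poly_mx_horner (p : {poly R}) (A : 'M[R]_m.+1) :
  poly_mx p A = (map_poly scalar_mx p).[A].
Proof.
rewrite (horner_coef_wide _ (size_poly _ _)) /poly_mx.
by apply: eq_bigr => i _; rewrite coef_map /= -mulmxE mul_scalar_mx.
Qed.

Lemma poly_mx_taylor (p : {poly R}) (c : R) (B : 'M[R]_m.+1) (w : nat) :
  (size p <= w)%N -> poly_mx p (c%:M + B) = \sum_(i < w) (p^`N(i)).[c] *: B ^+ i.
Proof.
move=> le_p_w.
rewrite poly_mx_horner (nderiv_taylor_wide (n := w) (esym (scalar_mxC c B))).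
  by apply: eq_bigr => i _; rewrite nderivn_map horner_map /= -mulmxE mul_scalar_mx.
exact: leq_trans (size_poly _ _) le_p_w.
Qed.

End PolyMx.

Section BlockDiagonal.
Variables (R : comNzRingType) (n : nat) (p_ : 'I_n -> nat) (m : nat).

Lemma mxdiagX_mul_mxcol (A_ : forall j, 'M[R]_(p_ j))
    (X_ : forall j, 'M[R]_(p_ j, m)) (e : nat) :
  (\mxdiag_j A_ j) ^+ e *m \mxcol_j X_ j = \mxcol_j (A_ j ^+ e *m X_ j).
Proof.
elim: e => [|e IHe].
  by rewrite expr0 mul1mx; apply: eq_mxcol => j; rewrite expr0 mul1mx.
rewrite exprS -mulmxE -mulmxA IHe mul_mxdiag_mxcol.
by apply: eq_mxcol => j; rewrite exprS -mulmxE mulmxA.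
Qed.

Lemma poly_mx_mxdiag_mul_mxcol (p : {poly R}) (A_ : forall j, 'M[R]_(p_ j))
    (X_ : forall j, 'M[R]_(p_ j, m)) :
  poly_mx p (\mxdiag_j A_ j) *m \mxcol_j X_ j = \mxcol_j (poly_mx p (A_ j) *m X_ j).
Proof.
have scale_mxcol a Y_ : a *: \mxcol_j Y_ j = \mxcol_j (a *: Y_ j : 'M[R]_(p_ j, m)).
  by apply/matrixP => r c; rewrite !mxE.
rewrite /poly_mx mulmx_suml.
rewrite (eq_bigr (fun i : 'I_(size p) => \mxcol_j (p`_i *: (A_ j ^+ i *m X_ j)))); last first.
  by move=> i _; rewrite -scalemxAl mxdiagX_mul_mxcol scale_mxcol.
rewrite -mxcol_sum; apply: eq_mxcol => j.
by rewrite mulmx_suml; apply: eq_bigr => i _; rewrite scalemxAl.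
Qed.

End BlockDiagonal.

Lemma herm_dot_mxcol (C : numClosedFieldType) (n : nat) (p_ : 'I_n -> nat)
    (Y_ X_ : forall j, 'cV[C]_(p_ j)) :
  herm_dot (\mxcol_j Y_ j) (\mxcol_j X_ j) = \sum_j herm_dot (Y_ j) (X_ j).
Proof.
have herm_dotE m (u v : 'cV[C]_m) :
    herm_dot u v = ((map_mx (fun a : C => a^*) u)^T *m v) 0 0.
  by rewrite /herm_dot !mxE; apply: eq_bigr => i _; rewrite !mxE.
rewrite herm_dotE.
have -> : map_mx (fun a : C => a^*) (\mxcol_j Y_ j) =
          \mxcol_j map_mx (fun a : C => a^*) (Y_ j).
  by apply/matrixP => i j; rewrite !mxE.
rewrite tr_mxcol mul_mxrow_mxcol summxE.
by apply: eq_bigr => j _; rewrite herm_dotE.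
Qed.

Section JordanBlock.
Variables (R : comNzRingType) (kj : nat) (alpha : nat -> R).

Definition weighted_shift : 'M[R]_kj.+1 :=
  \matrix_(r, s) (if s == r.+1 :> nat then alpha (kj - r)%N else 0).

Definition alpha_prod (s : nat) : R := \prod_(1 <= i < s.+1) alpha i.

Lemma jordan_likeE (z : R) : jordan_like kj z alpha = z%:M + weighted_shift.
Proof.
apply/matrixP => r s; rewrite !mxE.
have [<-|ne_rs] := eqVneq r s; last by rewrite ifN // mulr0n add0r.
by rewrite eqxx mulr1n ifN ?addr0 //; lia.
Qed.

Lemma weighted_shiftX_mul_delta (s : nat) :
  weighted_shift ^+ s *m delta_mx ord_max 0 =
  \col_r (if (r + s == kj)%N then alpha_prod s else 0).
Proof.
elim: s => [|s IHs].
  rewrite expr0 mul1mx; apply/matrixP => r c.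
  rewrite !mxE (ord1 c) eqxx andbT addn0 /alpha_prod big_geq //.
  by rewrite [r == _](_ : _ = (r == kj :> nat)) //; case: eqP.
rewrite exprS -mulmxE -mulmxA IHs; apply/matrixP => r c; rewrite !mxE.
under eq_bigr do rewrite !mxE.
have [r_s_kj|ne_kj] := eqVneq (r + s.+1)%N kj; last first.
  rewrite big1 // => i _; case: eqP => [-> | _]; last by rewrite mul0r.
  by rewrite ifN ?mulr0 // addSnnS.
have lt_r_kj : (r.+1 < kj.+1)%N by lia.
rewrite (bigD1 (Ordinal lt_r_kj)) //= big1 => [|i ne_i]; last first.
  by rewrite ifN ?mul0r //; apply: contra ne_i => /eqP eq_i; apply/eqP/val_inj.
rewrite eqxx addSnnS r_s_kj eqxx addr0 /alpha_prod [in RHS]big_nat_recr //= mulrC.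
by have -> : (kj - r = s.+1)%N by lia.
Qed.

Lemma poly_mx_jordan_like_mul_delta (p : {poly R}) (z : R) :
  poly_mx p (jordan_like kj z alpha) *m delta_mx ord_max 0 =
  \col_r ((p^`N(kj - r)).[z] * alpha_prod (kj - r)).
Proof.
rewrite jordan_likeE (poly_mx_taylor _ _ (leq_addr kj.+1 (size p))).
rewrite mulmx_suml; apply/matrixP => r c; rewrite summxE !mxE.
under eq_bigr do rewrite -scalemxAl weighted_shiftX_mul_delta !mxE.
have lt_kj_r : (kj - r < size p + kj.+1)%N by lia.
rewrite (bigD1 (Ordinal lt_kj_r)) //= big1 => [|i ne_i]; last first.
  by rewrite ifN ?mulr0 //; apply: contra ne_i => /eqP eq_i; apply/eqP/val_inj => /=; lia.
by rewrite ifT ?addr0 //; apply/eqP; have := ltn_ord r; lia.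
Qed.

End JordanBlock.

Lemma herm_dot_jordan_like (C : numClosedFieldType) (kj : nat) (z : C)
    (alpha : nat -> C) (beta : C) (p q : {poly C}) :
  let J := jordan_like kj z alpha in
  let w := beta *: delta_mx ord_max 0 in
  herm_dot (poly_mx q J *m w) (poly_mx p J *m w) =
  `|beta| ^+ 2 * \sum_(r < kj.+1)
     `|alpha_prod alpha r / r`!%:R| ^+ 2 * ((q^`(r)).[z])^* * (p^`(r)).[z].
Proof.
rewrite /= -!scalemxAr !poly_mx_jordan_like_mul_delta /herm_dot mulr_sumr.
rewrite (reindex_inj rev_ord_inj); apply: eq_bigr => r _; rewrite !mxE /=.
have -> : (kj - (kj.+1 - r.+1) = r)%N by have := ltn_ord r; lia.
rewrite !nderivn_def !hornerMn !normCKC.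
set Q := (q^`N(r)).[z]; set P := (p^`N(r)).[z].
have nz_fact : (r`!%:R : C) != 0 by rewrite pnatr_eq0 -lt0n fact_gt0.
rewrite !(rmorphM Num.conj_op) !(rmorphMn Num.conj_op) (fmorphV Num.conj_op).
rewrite (rmorph_nat Num.conj_op) -[Q^* *+ _]mulr_natr -[P *+ _]mulr_natr.
by field.
Qed.

Theorem theorem1 (C : numClosedFieldType) (n : nat) (hn : (1 <= n)%N)
  (z : 'I_n -> C) (hz : injective z) (kk : 'I_n -> nat)
  (beta : 'I_n -> C) (alpha : 'I_n -> nat -> C)
  (k l : nat) (hk : (k <= \sum_(j < n) (kk j).+1)%N)
  (hl : (l <= \sum_(j < n) (kk j).+1)%N)
  (x y : 'cV[C]_(\sum_(j < n) (kk j).+1))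
  (hx : in_krylov k (Zmat kk z alpha) (wvec kk beta) x)
  (hy : in_krylov l (Zmat kk z alpha) (wvec kk beta) y)
  (p q : {poly C}) (hp : (size p <= k.+1)%N) (hq : (size q <= l.+1)%N)
  (hpx : poly_mx p (Zmat kk z alpha) *m wvec kk beta = x)
  (hqy : poly_mx q (Zmat kk z alpha) *m wvec kk beta = y) :
  herm_dot y x =
  \sum_(j < n) `|beta j| ^+ 2 *
    (\sum_(r < (kk j).+1)
       `|(\prod_(1 <= i < r.+1) alpha j i) / (r`!)%:R| ^+ 2 *
       ((q^`(r)).[z j])^* * (p^`(r)).[z j]).
Proof.
(* Only hpx and hqy matter: the identity holds for all polynomials p and q. *)
rewrite -hpx -hqy /Zmat /wvec !poly_mx_mxdiag_mul_mxcol herm_dot_mxcol.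
by apply: eq_bigr => j _; rewrite herm_dot_jordan_like.
Qed.
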